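(* Let $n\ge m\ge 2$ and let $\bm L\in\mathbb{R}^{m\times m}$ be the lower triangular matrix \[ L_{ij}=\begin{cases}\sqrt{\dfrac{m-i}{m-i+1}}, & i=j<m,\\[1ex] -\dfrac{1}{\sqrt{(m-j+1)(m-j)}}, & 1\le j<i\le m,\\[1ex] 0, & \text{otherwise}.\end{cases} \] Then \[ \widetilde{\mathcal O}_{m,n}=\left\{\bm L\bm Q+\frac{1}{\sqrt{mn}}\bm J_{m\times n}\ :\ \bm Q\in\mathbb{R}^{m\times n},\ \bm Q\bm Q^T=\bm I_m,\ \bm Q^T\bm e_m=\bm\xi_n\right\}, \] i.e. the set of matrices of this form where $\bm Q$ has orthonormal rows and last row equal to $\bm\xi_n^T$.
   Context: $\bm 1_k$ denotes the all-ones vector in $\mathbb{R}^k$, $\bm\xi_k=\frac{1}{\sqrt k}\bm 1_k$, $\bm J_{m\times n}$ is the $m\times n$ all-ones matrix, and $\bm e_m$ is the $m$-th standard basis vector of $\mathbb{R}^m$. $\widetilde{\mathcal O}_{m,n}:=\{\bm W\in\mathbb{R}^{m\times n}: \bm W\bm W^T=\bm I_m,\ \bm\xi_m^T\bm W\bm\xi_n=1\}$ (the set of semi-orthogonal $m\times n$ matrices maximizing the sum of all entries). The matrix $\bm L$ is the Cholesky factor of $\bm I_m-\frac1m\bm J_m$. *)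

From HB Require Import structures.
From mathcomp Require Import all_boot all_order all_algebra.
Set Implicit Arguments. Unset Strict Implicit. Unset Printing Implicit Defensive.
Import Order.TTheory GRing.Theory Num.Theory.
Local Open Scope ring_scope.

Definition xi (R : rcfType) (k : nat) : 'cV[R]_k := const_mx (Num.sqrt (k%:R))^-1.

Definition Jmx (R : rcfType) (m n : nat) : 'M[R]_(m, n) := const_mx 1.

Definition e_last (R : rcfType) (m : nat) : 'cV[R]_m :=
  \col_(i < m) (if (i : nat) == m.-1 then 1 else 0).

Definition Otilde (R : rcfType) (m n : nat) (W : 'M[R]_(m, n)) : Prop :=
  W *m W^T = 1%:M /\ (xi R m)^T *m W *m xi R n = 1%:M.

(* The matrix L, with 0-based indices i, j (1-based i+1, j+1) *)
Definition Lmx (R : rcfType) (m : nat) : 'M[R]_m :=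
  \matrix_(i < m, j < m)
    if (i == j) && (i.+1 < m)%N then
      Num.sqrt ((m - i.+1)%:R / (m - i.+1).+1%:R)
    else if (j < i)%N then
      - (Num.sqrt (((m - j.+1).+1 * (m - j.+1))%:R))^-1
    else 0.

From HB Require Import structures.
From mathcomp Require Import all_boot all_order all_algebra.
From mathcomp Require Import ring lra zify.
Import Order.TTheory GRing.Theory Num.Theory.
Local Open Scope ring_scope.

(* The last column of L is zero, and filling it with xi_m gives an orthogonal
   matrix M = L + xi_m e_m^T: writing a_k, b_k for the diagonal and
   subdiagonal entries of a column with k entries below the diagonal, the
   identities a_k + k b_k = 0 and a_k^2 + k b_k^2 = 1 make the columns
   orthonormal.  Since M e_m = xi_m, the substitution W = M Q maps the
   matrices Q with Q Q^T = I and Q^T e_m = xi_n onto the W with W W^T = I and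
   W^T xi_m = xi_n, and M Q = L Q + xi_m xi_n^T = L Q + J / sqrt(mn).  Finally,
   for W W^T = I the condition xi_m^T W xi_n = 1 forces W^T xi_m = xi_n by the
   equality case of Cauchy-Schwarz. *)

Section ColumnVectors.
Variables (R : realDomainType) (n : nat).
Implicit Types u v : 'cV[R]_n.

Lemma tr_mulmx_self_eq0 u : u^T *m u = 0 -> u = 0.
Proof.
move=> /matrixP /(_ 0 0); rewrite !mxE => sum_sq0.
have {}sum_sq0 : \sum_(i < n) u i 0 * u i 0 = 0.
  by rewrite -[RHS]sum_sq0; apply: eq_bigr => i _; rewrite mxE.
apply/matrixP => i k; rewrite ord1 mxE.
have /eqP := psumr_eq0P (fun i _ => sqr_ge0 (u i 0)) sum_sq0 (i := i) isT.
by rewrite mulf_eq0 orbb => /eqP.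
Qed.

Lemma cV_dotC u v : u^T *m v = v^T *m u.
Proof.
apply/matrixP => i j; rewrite !ord1 !mxE.
by apply: eq_bigr => k _; rewrite !mxE mulrC.
Qed.

(* Equality case of Cauchy-Schwarz: |u - v|^2 = 1 + 1 - 2 u.v = 0. *)
Lemma unit_cV_eq u v :
  u^T *m u = 1%:M -> v^T *m v = 1%:M -> u^T *m v = 1%:M -> u = v.
Proof.
move=> uu1 vv1 uv1; apply/eqP; rewrite -subr_eq0; apply/eqP/tr_mulmx_self_eq0.
rewrite [(u - v)^T]raddfB /= mulmxDl mulNmx !mulmxDr !mulmxN uu1 vv1 uv1.
by rewrite cV_dotC uv1 subrr.
Qed.

End ColumnVectors.

Definition step {V : nmodType} (j : nat) (x y : V) (i : nat) : V :=
  if (i < j)%N then 0 else if i == j then x else y.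

Lemma sum_step (V : nmodType) (m : nat) (j : 'I_m) (x y : V) :
  \sum_(i < m) step j x y i = x + y *+ (m - j.+1).
Proof.
rewrite -(big_mkord xpredT (step j x y)).
rewrite (big_cat_nat _ (n := j)) ?leq0n 1?ltnW //=.
rewrite big1_seq ?add0r; last first.
  by move=> i /=; rewrite mem_index_iota => /andP[_ ij]; rewrite /step ij.
rewrite big_ltn // {1}/step ltnn eqxx; congr (_ + _).
rewrite big_nat (eq_bigr (fun _ => y)) -?big_nat ?sumr_const_nat //.
by move=> i /andP[ji _]; rewrite /step ltnNge (ltnW ji) gtn_eqF.
Qed.

Section StepProducts.
Variables (R : pzSemiRingType) (x y x' y' : R) (i : nat).

Lemma step_mul_same (j : nat) :
  step j x y i * step j x' y' i = step j (x * x') (y * y') i.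
Proof. by rewrite /step; case: ifP => _; [rewrite mul0r | case: ifP]. Qed.

Lemma step_mul_lt (j j' : nat) : (j < j')%N ->
  step j x y i * step j' x' y' i = step j' (y * x') (y * y') i.
Proof.
rewrite /step => jj'; case: (ltngtP i j') => ij'; rewrite ?mulr0 //.
  by rewrite ltnNge (ltnW (ltn_trans jj' ij')) gtn_eqF // (ltn_trans jj' ij').
by rewrite ltnNge ij' (ltnW jj') gtn_eqF.
Qed.

Lemma step_mulr (j : nat) (c : R) : step j x y i * c = step j (x * c) (y * c) i.
Proof. by rewrite /step; case: ifP => _; [rewrite mul0r | case: ifP]. Qed.

End StepProducts.

Section Coefficients.
Variable R : rcfType.

Lemma sqr_invsqrt_natr (k : nat) : (0 < k)%N -> (Num.sqrt (k%:R : R))^-1 ^+ 2 *+ k = 1.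
Proof.
move=> k_gt0; rewrite exprVn sqr_sqrtr ?ler0n // -mulr_natr mulVf //.
by rewrite pnatr_eq0 -lt0n.
Qed.

Definition Ldiag (k : nat) : R := Num.sqrt (k%:R / k.+1%:R).
Definition Lsub (k : nat) : R := - (Num.sqrt ((k.+1 * k)%:R))^-1.

Lemma Ldiag_sqrt_quot (k : nat) : Ldiag k = k%:R / Num.sqrt ((k.+1 * k)%:R).
Proof.
rewrite -[RHS]ger0_norm ?divr_ge0 ?sqrtr_ge0 // -sqrtr_sqr; congr Num.sqrt.
rewrite expr_div_n sqr_sqrtr ?ler0n //.
case: k => [|k]; first by rewrite expr0n !mul0r.
have k_ge0 : 0 <= k%:R :> R := ler0n _ _.
rewrite natrM; field.
by apply/andP; split; apply: lt0r_neq0; lra.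
Qed.

Lemma Ldiag_add_Lsub (k : nat) : Ldiag k + Lsub k *+ k = 0.
Proof. by rewrite Ldiag_sqrt_quot /Lsub mulNrn mulr_natl subrr. Qed.

Lemma Ldiag_Lsub_norm (k : nat) : (0 < k)%N -> Ldiag k ^+ 2 + Lsub k ^+ 2 *+ k = 1.
Proof.
rewrite -(ltr0n R) => k_gt0.
rewrite sqr_sqrtr ?divr_ge0 ?ler0n // sqrrN exprVn sqr_sqrtr ?ler0n // natrM.
rewrite -mulr_natr; field.
by apply/andP; split; apply: lt0r_neq0; lra.
Qed.

End Coefficients.

Section BasicVectors.
Variable R : rcfType.

Lemma xi_unit (k : nat) : (0 < k)%N -> (xi R k)^T *m xi R k = 1%:M.
Proof.
move=> k_gt0; apply/matrixP => i j; rewrite !ord1 !mxE.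
under eq_bigr do rewrite !mxE -expr2.
by rewrite sumr_const card_ord sqr_invsqrt_natr.
Qed.

Lemma xi_mul_tr (m n : nat) :
  xi R m *m (xi R n)^T = (Num.sqrt ((m * n)%:R))^-1 *: Jmx R m n.
Proof.
apply/matrixP => i j; rewrite !mxE big_ord1 !mxE.
by rewrite mulr1 natrM sqrtrM ?ler0n // invfM.
Qed.

Lemma e_last_unit (m : nat) : (0 < m)%N -> (e_last R m)^T *m e_last R m = 1%:M.
Proof.
move=> m_gt0; have last_lt : (m.-1 < m)%N by rewrite prednK.
apply/matrixP => i k; rewrite !ord1 !mxE (bigD1 (Ordinal last_lt)) //= big1.
  by rewrite !mxE eqxx mulr1 addr0.
move=> j /eqP j_neq; rewrite !mxE.
by rewrite ifF ?mul0r //; apply/eqP => j_last; apply/j_neq/val_inj.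
Qed.

End BasicVectors.

Section OrthogonalCompletion.
Variables (R : rcfType) (m : nat).
Implicit Types i j : 'I_m.

Lemma Lmx_col i j : (j.+1 < m)%N ->
  Lmx R m i j = step j (Ldiag R (m - j.+1)) (Lsub R (m - j.+1)) i.
Proof.
move=> j_lt; rewrite mxE /step -[i == j]val_eqE /=.
by case: (ltngtP i j) => // /val_inj ->; rewrite j_lt.
Qed.

Lemma Lmx_col_last i j : (j : nat) = m.-1 -> Lmx R m i j = 0.
Proof.
move=> j_last; have i_lt := ltn_ord i.
rewrite mxE -[i == j]val_eqE /= j_last.
have -> : ((i == m.-1 :> nat) && (i.+1 < m))%N = false by lia.
by have -> : (m.-1 < i)%N = false by lia.
Qed.

Definition Lorth : 'M[R]_m := Lmx R m + xi R m *m (e_last R m)^T.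

Lemma LorthE i j :
  Lorth i j = Lmx R m i j + (if (j : nat) == m.-1 then (Num.sqrt m%:R)^-1 else 0).
Proof.
rewrite {1}/Lorth mxE; congr (_ + _).
by rewrite mxE big_ord1 !mxE; case: eqP; rewrite ?mulr1 ?mulr0.
Qed.

Lemma Lorth_col i j : (j.+1 < m)%N ->
  Lorth i j = step j (Ldiag R (m - j.+1)) (Lsub R (m - j.+1)) i.
Proof. by move=> j_lt; rewrite LorthE Lmx_col // ifF ?addr0 //; lia. Qed.

Lemma Lorth_col_last i j : (j : nat) = m.-1 -> Lorth i j = (Num.sqrt m%:R)^-1.
Proof. by move=> j_last; rewrite LorthE Lmx_col_last // j_last eqxx add0r. Qed.

Lemma Lorth_dot_le j j' : (j <= j')%N -> \sum_i Lorth i j * Lorth i j' = (j == j')%:R.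
Proof.
move=> le_jj'; have j'_lt_m := ltn_ord j'.
have [j'_last | j'_lt] : (j' : nat) = m.-1 \/ (j'.+1 < m)%N by lia.
  under eq_bigr do rewrite [Lorth _ j']Lorth_col_last //.
  have [j_last | j_lt] : (j : nat) = m.-1 \/ (j.+1 < m)%N by lia.
    have -> : j == j' by apply/eqP/val_inj; rewrite /= j_last j'_last.
    under eq_bigr do rewrite Lorth_col_last // -expr2.
    by rewrite sumr_const card_ord sqr_invsqrt_natr //; lia.
  have -> : (j == j') = false by apply/eqP => /(congr1 val) /=; lia.
  under eq_bigr do rewrite Lorth_col // step_mulr.
  by rewrite sum_step -mulrnAl -mulrDl Ldiag_add_Lsub mul0r.
have j_lt : (j.+1 < m)%N by lia.
under eq_bigr do rewrite !Lorth_col //.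
have [<- | j_neq] := eqVneq j j'.
  under eq_bigr do rewrite step_mul_same -!expr2.
  by rewrite sum_step Ldiag_Lsub_norm // subn_gt0.
have lt_jj' : (j < j')%N by rewrite ltn_neqAle le_jj' andbT.
under eq_bigr do rewrite step_mul_lt //.
by rewrite sum_step -mulrnAr -mulrDr Ldiag_add_Lsub mulr0.
Qed.

Lemma trmx_Lorth_mul : Lorth^T *m Lorth = 1%:M.
Proof.
apply/matrixP => j j'; rewrite !mxE; under eq_bigr do rewrite mxE.
case: (leqP j j') => [|lt_j'j]; first exact: Lorth_dot_le.
rewrite eq_sym -Lorth_dot_le ?(ltnW lt_j'j) //.
by apply: eq_bigr => i _; rewrite mulrC.
Qed.

Lemma Lorth_mul_tr : Lorth *m Lorth^T = 1%:M.
Proof. exact/mulmx1C/trmx_Lorth_mul. Qed.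

Lemma Lmx_mul_e_last : Lmx R m *m e_last R m = 0.
Proof.
apply/matrixP => i k; rewrite [LHS]mxE [RHS]mxE big1 // => j _.
rewrite [e_last _ _ _ _]mxE.
by case: eqP => [/(Lmx_col_last i j) -> | _]; rewrite ?mul0r ?mulr0.
Qed.

Lemma Lorth_mul_e_last : (0 < m)%N -> Lorth *m e_last R m = xi R m.
Proof.
move=> m_gt0.
by rewrite mulmxDl Lmx_mul_e_last add0r -mulmxA e_last_unit // mulmx1.
Qed.

Lemma Lorth_mulmx n (Q : 'M[R]_(m, n)) : Q^T *m e_last R m = xi R n ->
  Lorth *m Q = Lmx R m *m Q + (Num.sqrt ((m * n)%:R))^-1 *: Jmx R m n.
Proof.
move=> Qe; rewrite mulmxDl -mulmxA -xi_mul_tr; congr (_ + _ *m _).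
by rewrite -Qe trmx_mul trmxK.
Qed.

End OrthogonalCompletion.

Lemma OtildeE (R : rcfType) (m n : nat) (W : 'M[R]_(m, n)) : (0 < m)%N -> (0 < n)%N ->
  Otilde W <-> W *m W^T = 1%:M /\ W^T *m xi R m = xi R n.
Proof.
move=> m_gt0 n_gt0; split=> -[WWt Wxi]; split=> //.
  apply: unit_cV_eq; last by rewrite trmx_mul trmxK.
    by rewrite trmx_mul trmxK mulmxA -(mulmxA _ W) WWt mulmx1 xi_unit.
  exact: xi_unit.
by rewrite -[(xi R m)^T *m W]trmxK trmx_mul !trmxK Wxi xi_unit.
Qed.

Theorem theorem2 (R : rcfType) (m n : nat) (hm : (2 <= m)%N) (hmn : (m <= n)%N)
    (W : 'M[R]_(m, n)) :
  Otilde W <->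
  exists Q : 'M[R]_(m, n),
    [/\ Q *m Q^T = 1%:M, Q^T *m e_last R m = xi R n &
        W = Lmx R m *m Q + (Num.sqrt ((m * n)%:R))^-1 *: Jmx R m n].
Proof.
have m_gt0 : (0 < m)%N by lia.
have n_gt0 : (0 < n)%N by lia.
have Me : Lorth R m *m e_last R m = xi R m by exact: Lorth_mul_e_last.
have Mtxi : (Lorth R m)^T *m xi R m = e_last R m.
  by rewrite -Me mulmxA trmx_Lorth_mul mul1mx.
split=> [/OtildeE [] // WWt Wxi | [Q [QQt Qe ->]]].
  have Qe : ((Lorth R m)^T *m W)^T *m e_last R m = xi R n.
    by rewrite trmx_mul trmxK -mulmxA Me.
  exists ((Lorth R m)^T *m W); split=> //.
    by rewrite trmx_mul trmxK mulmxA -(mulmxA _ W) WWt mulmx1 trmx_Lorth_mul.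
  by rewrite -Lorth_mulmx // mulmxA Lorth_mul_tr mul1mx.
rewrite -Lorth_mulmx //; apply/OtildeE => //; split.
  by rewrite trmx_mul mulmxA -(mulmxA _ Q) QQt mulmx1 Lorth_mul_tr.
by rewrite trmx_mul -mulmxA Mtxi.
Qed.
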